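(* Let $n>k\geq 3$ be odd integers and let $A$ be a cyclically $k$-diagonal $n\times n$ array. Let $E=\{e_1<e_2<\dots<e_t\}\subseteq[1,n]$, let $C=(1,\dots,1)\in\{-1,1\}^n$ and let $R=(r_1,\dots,r_n)\in\{-1,1\}^n$ with $r_i=-1$ if $i\in E$ and $r_i=1$ if $i\notin E$. Let $D_1=\{(d,d):d\in[1,n]\}$ be the main diagonal and let $F:D_1\to D_1$ send $(d,d)$ to the first cell of $D_1$ occurring in the sequence $CN_{RC}(d,d),CN_{RC}^2(d,d),\dots$. Define $\Theta(d)$ to be the element of $[1,n]$ congruent to $d-(k-1)$ modulo $n$, and (when $E\neq\emptyset$) $\Omega:E\to E$, $\Omega(e_s)=e_{s+(k-1)}$, subscripts read modulo $t$. Define $S_D:[1,n]\to[1,n]$ by $S_D(d)=\Theta(\Omega(d))$ if $d\in E$ and $S_D(d)=\Theta(d)$ otherwise. Then for every $d\in[1,n]$, $F(d,d)=(S_D(d),S_D(d))$.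
   Context: An $m\times n$ array is partially filled; $F(A)$ is its set of filled cells, every row and column contains at least one filled cell, and the array is toroidal (row indices mod $m$, column indices mod $n$). The row successor of $(i,j)\in F(A)$ is $s_R(i,j)=(i,j+t)$ with $t\ge1$ minimal such that this cell is filled; the column successor is $s_C(i,j)=(i+t,j)$ with $t\geq 1$ minimal such that it is filled; both are permutations of $F(A)$. For $R=(r_1,\dots,r_m)\in\{-1,1\}^m$, $C=(c_1,\dots,c_n)\in\{-1,1\}^n$, the Crazy Knight's move is $CN_{RC}(i,j)=s_C^{c_{j'}}(i,j')$ where $(i,j')=s_R^{r_i}(i,j)$. An $n\times n$ array is cyclically $k$-diagonal if its filled cells are exactly those $(i,j)$ with $i-j \bmod n\in\{0,1,\dots,k-1\}$ (the diagonals $D_1,\dots,D_k$, where $D_s=\{(s,1),(s+1,2),\dots,(s-1,n)\}$). *)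

From mathcomp Require Import all_boot all_order all_algebra.
Set Implicit Arguments. Unset Strict Implicit. Unset Printing Implicit Defensive.

(* Indices are 0-based: row/column index i : 'I_n stands for the paper's i+1. *)

Lemma ord_pos (n : nat) (j : 'I_n) : 0 < n.
Proof. exact: leq_ltn_trans (leq0n j) (ltn_ord j). Qed.

Definition addmod (n : nat) (j : 'I_n) (t : nat) : 'I_n :=
  Ordinal (ltn_pmod (j + t) (ord_pos j)).

Definition cell (m n : nat) := ('I_m * 'I_n)%type.

(* row successor: (i, j + t) with t >= 1 minimal such that the cell is filled *)
Definition sR (m n : nat) (A : {set cell m n}) (x : cell m n) : cell m n :=
  let t := find (fun t => (x.1, addmod x.2 t) \in A) (iota 1 n) in
  (x.1, addmod x.2 t.+1).

(* column successor: (i + t, j) with t >= 1 minimal such that the cell is filled *)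
Definition sC (m n : nat) (A : {set cell m n}) (x : cell m n) : cell m n :=
  let t := find (fun t => (addmod x.1 t, x.2) \in A) (iota 1 m) in
  (addmod x.1 t.+1, x.2).

(* f^e for e in {-1, 1}; f^-1 is the (fingraph) inverse finv f, which is the
   inverse permutation on F(A) *)
Definition spow (T : finType) (f : T -> T) (e : int) : T -> T :=
  if (e < 0)%R then finv f else f.

Definition CN (m n : nat) (A : {set cell m n}) (R : 'I_m -> int) (C : 'I_n -> int)
  (x : cell m n) : cell m n :=
  let y := spow (sR A) (R x.1) x in spow (sC A) (C y.2) y.

(* cyclically k-diagonal n x n array: filled iff (i - j) mod n in {0,..,k-1} *)
Definition kdiag (n k : nat) : {set cell n n} :=
  [set x : cell n n | (x.1 + (n - x.2)) %% n < k].

Definition D1 (n : nat) : {set cell n n} := [set x : cell n n | x.1 == x.2 :> nat].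

Definition first_hit (T : Type) (f : T -> T) (P : T -> Prop) (x y : T) : Prop :=
  exists t : nat, [/\ 0 < t, iter t f x = y, P y &
                      forall s, 0 < s < t -> ~ P (iter s f x)].

Definition Theta (n k : nat) (d : 'I_n) : 'I_n := addmod d (n - (k - 1) %% n).

Definition Eseq (n : nat) (E : {set 'I_n}) : seq 'I_n :=
  sort (fun a b : 'I_n => (a <= b)%N) (enum E).

Definition Omega (n k : nat) (E : {set 'I_n}) (d : 'I_n) : 'I_n :=
  let s := Eseq E in nth d s ((index d s + (k - 1)) %% size s).

Definition S_D (n k : nat) (E : {set 'I_n}) (d : 'I_n) : 'I_n :=
  if d \in E then Theta k (Omega k E d) else Theta k d.

Definition RofE (n : nat) (E : {set 'I_n}) : 'I_n -> int :=
  fun i => if i \in E then (-1)%R else 1%R.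

From mathcomp Require Import all_boot all_order all_algebra.
From mathcomp Require Import zify.
Set Implicit Arguments. Unset Strict Implicit. Unset Printing Implicit Defensive.
Import GRing.Theory.

(* Describe a filled cell by its row i and its diagonal d = i - j (mod n); the
   k-diagonal array consists of the cells with d < k. Along a row the row
   successor lowers the diagonal by one (wrapping from 0 to k-1); down a column
   the column successor raises it by one, except that from diagonal k-1 it jumps
   to diagonal 0, i.e. onto D_1, in row i - (k-1). So a knight's move from row i
   outside E keeps the diagonal d (and from d = 0 jumps onto D_1 in row
   i - (k-1)), while from a row of E it turns d into d + 2 mod k, landing on D_1
   exactly when d = k-2. Started on D_1 in the row e_s of E, the knight is on diagonal 2c mod k
   after crossing c rows of E; as k is odd, this is never 0 and equals k-2 only for
   c = k-1: the knight first returns to D_1 right after row e_(s+k-1), in row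
   e_(s+k-1) - (k-1). *)

Section FirstHit.
Variables (T : Type) (f : T -> T) (P : T -> Prop).

Lemma first_hit_one x : P (f x) -> first_hit f P x (f x).
Proof. by move=> Pfx; exists 1; split=> // s; rewrite ltnNge => /andP[/negP]. Qed.

Lemma first_hit_iter m x z : (forall s, 0 < s <= m -> ~ P (iter s f x)) ->
  first_hit f P (iter m f x) z -> first_hit f P x z.
Proof.
move=> miss [t [t_gt0 <- Pz before]]; exists (t + m).
split; rewrite ?iterD ?addn_gt0 ?t_gt0 // => s /andP[s_gt0 s_lt].
have [s_le_m | m_lt_s] := leqP s m; first by apply: miss; rewrite s_gt0.
by rewrite -(subnK (ltnW m_lt_s)) iterD; apply: before; lia.
Qed.

End FirstHit.

Lemma find_iota (p : pred nat) a l t : t < l -> p (a + t) ->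
  (forall s, s < t -> ~~ p (a + s)) -> find p (iota a l) = t.
Proof.
elim: t a l => [|t IH] a [|l] //= t_lt pt before.
  by rewrite addn0 in pt; rewrite pt.
have := before 0 isT; rewrite addn0 => /negbTE ->; congr S.
by apply: IH => [||s s_lt]; rewrite ?addSnnS //; apply: before.
Qed.

Lemma double_modn_if k c : c < k ->
  (2 * c) %% k = if 2 * c < k then 2 * c else 2 * c - k.
Proof.
move=> c_lt; case: ltnP => [|k_le]; first exact: modn_small.
by rewrite -{1}(subnK k_le) modnDr modn_small; lia.
Qed.

Lemma double_modn_eq0 k c : odd k -> c < k -> ((2 * c) %% k == 0) = (c == 0).
Proof.
move=> k_odd c_lt; have := odd_double_half k; rewrite k_odd double_modn_if //.
by case: ltnP; lia.
Qed.

Lemma double_modn_eq_pred2 k c : odd k -> 1 < k -> c < k ->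
  (((2 * c) %% k).+2 == k) = (c == k.-1).
Proof.
move=> k_odd k_gt1 c_lt; have := odd_double_half k; rewrite k_odd double_modn_if //.
by case: ltnP; lia.
Qed.

Section Zmod.
Variable n' : nat.
Local Notation n := n'.+1.

Lemma inZpD a b : inZp (a + b) = (inZp a + inZp b)%R :> 'I_n.
Proof. by apply: val_inj; rewrite /= modnDm. Qed.

Lemma inZp_subn t : t <= n -> inZp (n - t) = (- inZp t)%R :> 'I_n.
Proof.
move=> t_le; apply/eqP; rewrite -subr_eq0 opprK -inZpD subnK //.
by apply/eqP/val_inj; rewrite /= modnn.
Qed.

Lemma inZp_addn a : inZp (a + n) = inZp a :> 'I_n.
Proof. by apply: val_inj; rewrite /= modnDr. Qed.

Lemma addmodE (j : 'I_n) t : addmod j t = (j + inZp t)%R.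
Proof. by apply: val_inj; rewrite /= modnDmr. Qed.

End Zmod.

Lemma spow1 (T : finType) (f : T -> T) : spow f 1 = f.
Proof. by []. Qed.

Lemma spowN1 (T : finType) (f : T -> T) : spow f (-1) = finv f.
Proof. by []. Qed.

Section Cells.
Variable n' : nat.
Local Notation n := n'.+1.
Implicit Types (A : {set cell n n}) (x : cell n n).

(* The cell in row i on diagonal d, i.e. in column i - d; i and d are read
   modulo n, so i may be an unreduced row number. *)
Definition cell_at (i d : nat) : cell n n := (inZp i, (inZp i - inZp d)%R).

Lemma cell_at_coord x : cell_at x.1 (x.1 - x.2)%R = x.
Proof. by case: x => a b; rewrite /cell_at !valZpK subKr. Qed.

Lemma cell_at0 i : cell_at i 0 = (inZp i, inZp i).
Proof. by rewrite /cell_at (_ : inZp 0 = 0%R) ?subr0 //; apply: val_inj. Qed.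

Lemma cell_at_addn i d : cell_at i (d + n) = cell_at i d.
Proof. by rewrite /cell_at inZp_addn. Qed.

Lemma cell_at_inj i j d e : d < n -> e < n -> cell_at i d = cell_at j e ->
  inZp i = inZp j :> 'I_n /\ d = e.
Proof.
move=> d_lt e_lt eq_cell; split; first exact: (congr1 (fun x : cell n n => x.1) eq_cell).
have := congr1 (fun x : cell n n => (x.1 - x.2)%R) eq_cell.
rewrite !subKr => /(congr1 val) /=.
by rewrite !modn_small.
Qed.

Lemma cell_at_right i d t : t <= n ->
  ((cell_at i d).1, addmod (cell_at i d).2 t) = cell_at i (d + (n - t)).
Proof. by move=> t_le; rewrite /cell_at addmodE inZpD inZp_subn // opprD opprK addrA. Qed.

Lemma cell_at_down i d t :
  (addmod (cell_at i d).1 t, (cell_at i d).2) = cell_at (i + t) (d + t).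
Proof. by rewrite /cell_at addmodE !inZpD [(inZp d + _)%R]addrC addrKA. Qed.

Lemma cell_at_D1 i d : (cell_at i d \in D1 n) = (d %% n == 0).
Proof.
rewrite inE val_eqE eq_sym -subr_eq0 addrAC subrr add0r oppr_eq0.
by rewrite -val_eqE.
Qed.

Lemma mem_kdiag k x : (x \in kdiag n k) = (val (x.1 - x.2)%R < k).
Proof. by rewrite inE /= modnDmr. Qed.

Lemma mem_kdiag_cell_at k i d : (cell_at i d \in kdiag n k) = (d %% n < k).
Proof. by rewrite mem_kdiag subKr. Qed.

Lemma sR_first A x t : t < n -> (x.1, addmod x.2 t.+1) \in A ->
  (forall s, s < t -> (x.1, addmod x.2 s.+1) \notin A) ->
  sR A x = (x.1, addmod x.2 t.+1).
Proof. by move=> t_lt At before; rewrite /sR (@find_iota _ 1 n t). Qed.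

Lemma sC_first A x t : t < n -> (addmod x.1 t.+1, x.2) \in A ->
  (forall s, s < t -> (addmod x.1 s.+1, x.2) \notin A) ->
  sC A x = (addmod x.1 t.+1, x.2).
Proof. by move=> t_lt At before; rewrite /sC (@find_iota _ 1 n t). Qed.

End Cells.

Arguments cell_at {n'} i d.

Section KDiagonal.
Variables n' k : nat.
Local Notation n := n'.+1.
Hypotheses (k_gt1 : 1 < k) (k_lt_n : k < n).
Local Notation A := (kdiag n k).

Lemma sR_kdiag i d : d < k -> sR A (cell_at i d) = cell_at i ((d + k.-1) %% k).
Proof.
case: d => [|d] d_lt.
  rewrite add0n modn_small; last lia.
  rewrite (@sR_first _ _ _ (n - k)) ?cell_at_right; try lia.
  - by congr cell_at; lia.
  - by rewrite mem_kdiag_cell_at modn_small; lia.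
  move=> s s_lt; rewrite cell_at_right ?mem_kdiag_cell_at ?modn_small; lia.
have shift_n : d.+1 + (n - 1) = d + n by lia.
have shift_k : d.+1 + k.-1 = d + k by lia.
rewrite (@sR_first _ _ _ 0) ?cell_at_right // shift_n cell_at_addn.
  by rewrite shift_k modnDr modn_small //; lia.
by rewrite mem_kdiag_cell_at modn_small; lia.
Qed.

Lemma sC_kdiag i d : d.+1 < k -> sC A (cell_at i d) = cell_at i.+1 d.+1.
Proof.
move=> d_lt; rewrite (@sC_first _ _ _ 0) ?cell_at_down ?addn1 //.
by rewrite mem_kdiag_cell_at modn_small //; lia.
Qed.

Lemma sC_kdiag_last i : sC A (cell_at i k.-1) = cell_at (i + (n - k.-1)) 0.
Proof.
rewrite (@sC_first _ _ _ (n - k)) ?cell_at_down; try lia.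
- have -> : (n - k).+1 = n - k.-1 by lia.
  by rewrite -[RHS]cell_at_addn; congr cell_at; lia.
- by rewrite (_ : k.-1 + _ = 0 + n) ?mem_kdiag_cell_at ?modnDr ?mod0n; lia.
move=> s s_lt; rewrite cell_at_down mem_kdiag_cell_at modn_small; lia.
Qed.

Lemma mem_kdiag_cell_at_modk i d : cell_at i (d %% k) \in A.
Proof.
have d_lt : d %% k < k by rewrite ltn_pmod //; lia.
by rewrite mem_kdiag_cell_at modn_small //; apply: ltn_trans k_lt_n.
Qed.

Lemma sR_kdiag_in : {homo sR A : x / x \in A}.
Proof.
move=> x; rewrite -[x]cell_at_coord mem_kdiag_cell_at modn_small // => x_in.
by rewrite sR_kdiag // mem_kdiag_cell_at_modk.
Qed.

Lemma sR_kdiag_inj : {in A &, injective (sR A)}.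
Proof.
move=> x y; rewrite !mem_kdiag => x_in y_in.
rewrite -[x]cell_at_coord -[y]cell_at_coord !sR_kdiag //.
have mod_lt m : m %% k < n by apply: ltn_trans k_lt_n; rewrite ltn_pmod //; lia.
case/cell_at_inj => // eq_row /eqP; rewrite eqn_modDr !modn_small //.
by move=> /eqP/val_inj eq_diag; rewrite /cell_at eq_row eq_diag.
Qed.

Lemma finv_sR_kdiag i d : d < k -> finv (sR A) (cell_at i d) = cell_at i (d.+1 %% k).
Proof.
move=> d_lt; have -> : cell_at i d = sR A (cell_at i (d.+1 %% k)).
  rewrite sR_kdiag; last by rewrite ltn_pmod //; lia.
  rewrite modnDml (_ : d.+1 + k.-1 = d + k); last lia.
  by rewrite modnDr modn_small.
by rewrite (finv_f_in sR_kdiag_in sR_kdiag_inj) ?mem_kdiag_cell_at_modk.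
Qed.

Variable E : {set 'I_n}.
Local Notation F := (CN A (RofE E) (fun _ => 1%R)).

Lemma CN_unfold x : F x = sC A (spow (sR A) (RofE E x.1) x).
Proof. by []. Qed.

Lemma CN_nonE i d : inZp i \notin E -> 0 < d < k -> F (cell_at i d) = cell_at i.+1 d.
Proof.
case: d => [|d] // iE /andP[_ d_lt].
rewrite CN_unfold /RofE (negbTE iE) spow1 sR_kdiag //.
rewrite (_ : d.+1 + k.-1 = d + k); last lia.
by rewrite modnDr modn_small ?sC_kdiag //; lia.
Qed.

Lemma CN_nonE_hit i : inZp i \notin E -> F (cell_at i 0) = cell_at (i + (n - k.-1)) 0.
Proof.
move=> iE; rewrite CN_unfold /RofE (negbTE iE) spow1 sR_kdiag; last lia.
by rewrite add0n modn_small ?sC_kdiag_last //; lia.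
Qed.

Lemma CN_E i d : inZp i \in E -> d < k -> d.+2 != k ->
  F (cell_at i d) = cell_at i.+1 ((d + 2) %% k).
Proof.
move=> iE d_lt d_ne; rewrite CN_unfold /RofE iE spowN1 finv_sR_kdiag //.
have [d_lt' | d_eq] := ltnP d.+1 k.
  by rewrite !modn_small ?sC_kdiag ?addn2 //; lia.
have -> : d.+1 = 0 + k by lia.
rewrite modnDr mod0n sC_kdiag // (_ : d + 2 = 1 + k); last lia.
by rewrite modnDr modn_small.
Qed.

Lemma CN_E_hit i : inZp i \in E -> F (cell_at i k.-2) = cell_at (i + (n - k.-1)) 0.
Proof.
move=> iE; rewrite CN_unfold /RofE iE spowN1 finv_sR_kdiag; last lia.
by rewrite (_ : k.-2.+1 = k.-1) ?modn_small ?sC_kdiag_last //; lia.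
Qed.

Lemma iter_CN_nonE i d m : 0 < d < k ->
  (forall l, i <= l < i + m -> inZp l \notin E) ->
  iter m F (cell_at i d) = cell_at (i + m) d.
Proof.
move=> d_range; elim: m => [|m IH] rows; first by rewrite addn0.
rewrite iterS IH => [|l /andP[il lm]]; last by apply: rows; rewrite il; lia.
by rewrite CN_nonE ?addnS //; apply: rows; rewrite leq_addr addnS ltnSn.
Qed.

End KDiagonal.

Section NextRow.
Variables (n' : nat) (E : {set 'I_n'.+1}).
Local Notation n := n'.+1.

(* Rows are numbered in nat, without reduction modulo n, so that the rows of E
   met by the knight form an increasing sequence. *)
Definition next_Erow (m : nat) : nat :=
  m.+1 + find (fun t => inZp (m.+1 + t) \in E) (iota 0 n).

Lemma next_Erow_gt m : m < next_Erow m.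
Proof. by rewrite /next_Erow addSn ltnS leq_addr. Qed.

Lemma mem_next_Erow m e : e \in E -> inZp (next_Erow m) \in E.
Proof.
move=> eE; set p := fun t => inZp (m.+1 + t) \in E.
have has_p : has p (iota 0 n).
  apply/hasP; exists (val (e - inZp m.+1)%R); first by rewrite mem_iota ltn_ord.
  by rewrite /p inZpD valZpK addrC subrK.
have := nth_find 0 has_p; rewrite nth_iota ?add0n //.
by move: has_p; rewrite has_find size_iota.
Qed.

Lemma next_Erow_min m l : m < l < next_Erow m -> inZp l \notin E.
Proof.
rewrite /next_Erow; set p := fun t => inZp (m.+1 + t) \in E.
case/andP=> m_lt l_lt; have before : l - m.+1 < find p (iota 0 n) by lia.
have := find_size p (iota 0 n); rewrite size_iota => find_le.
by have := before_find 0 before; rewrite nth_iota /p ?add0n ?subnKC // => [->|]; lia.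
Qed.

Lemma next_Erow_unique m l : m < l -> inZp l \in E ->
  (forall l', m < l' < l -> inZp l' \notin E) -> next_Erow m = l.
Proof.
move=> m_lt lE before; case: (ltngtP (next_Erow m) l) => // [lt | gt].
  have := before (next_Erow m).
  by rewrite next_Erow_gt lt (mem_next_Erow _ lE) => /(_ isT).
by have := @next_Erow_min m l; rewrite m_lt gt lE => /(_ isT).
Qed.

Lemma inZp_next_Erow m : inZp (next_Erow m) = inZp (next_Erow (m %% n)) :> 'I_n.
Proof.
have shift t : inZp (m.+1 + t) = inZp ((m %% n).+1 + t) :> 'I_n.
  by apply: val_inj; rewrite /= !addSnnS modnDml.
rewrite /next_Erow (@eq_find _ _ (fun t => inZp ((m %% n).+1 + t) \in E)) //.
by move=> t; rewrite /= shift.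
Qed.

End NextRow.

Section SortedRows.
Variables (n' : nat) (E : {set 'I_n'.+1}) (d : 'I_n'.+1).
Hypothesis dE : d \in E.
Local Notation n := n'.+1.
Local Notation s := (Eseq E).
Local Notation x r := (nth d s r : nat).

Lemma mem_Eseq y : (y \in s) = (y \in E).
Proof. by rewrite mem_sort mem_enum. Qed.

Lemma leq_nth_Eseq q r : q < size s -> r < size s -> q <= r -> x q <= x r.
Proof.
move=> q_lt r_lt; apply: (sorted_leq_nth (leT := fun a b : 'I_n => a <= b)).
- by move=> ? ? ?; apply: leq_trans.
- by move=> ?; apply: leqnn.
- by apply: sort_sorted => a b; apply: leq_total.
- exact: q_lt.
- exact: r_lt.
Qed.

Lemma next_Erow_nth_Eseq q : q < size s ->
  inZp (next_Erow E (x q)) = nth d s (q.+1 %% size s).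
Proof.
move=> q_lt; have s_uniq : uniq s by rewrite sort_uniq enum_uniq.
have index_lt y : y \in E -> index y s < size s by rewrite index_mem mem_Eseq.
have val_index y : y \in E -> (y : nat) = x (index y s).
  by move=> yE; rewrite nth_index ?mem_Eseq.
have nth_in r : r < size s -> nth d s r \in E by move=> r_lt; rewrite -mem_Eseq mem_nth.
have [q1_lt | q1_eq] := ltnP q.+1 (size s).
  rewrite modn_small // -[RHS]valZpK; apply: congr1; apply: next_Erow_unique.
  - rewrite ltn_neqAle leq_nth_Eseq // andbT (inj_eq val_inj) nth_uniq //; lia.
  - by rewrite valZpK nth_in.
  move=> l /andP[lo hi]; apply/negP => lE.
  have l_lt : l < n by apply: ltn_trans hi _.
  have := val_index _ lE; rewrite /= modn_small // => l_eq.
  have [le | gt] := leqP (index (inZp l) s) q.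
    by have := leq_nth_Eseq (index_lt _ lE) q_lt le; rewrite -l_eq; lia.
  by have := leq_nth_Eseq q1_lt (index_lt _ lE) gt; rewrite -l_eq; lia.
have sz_eq : size s = q.+1 by lia.
rewrite sz_eq modnn -[RHS]valZpK -[RHS](inZp_addn n'); congr inZp.
apply: next_Erow_unique; first by apply: ltn_addl.
  by rewrite inZp_addn valZpK nth_in // sz_eq.
move=> l /andP[lo hi]; apply/negP => lE; have x0_lt : x 0 < n := ltn_ord _.
have := val_index _ lE; have [l_lt | l_ge] := ltnP l n.
  rewrite /= modn_small // => l_eq.
  have idx_le : index (inZp l) s <= q by rewrite -ltnS -sz_eq index_lt.
  by have := leq_nth_Eseq (index_lt _ lE) q_lt idx_le; rewrite -l_eq; lia.
have -> : nat_of_ord (inZp l : 'I_n) = l - n.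
  by rewrite /= -{1}(subnK l_ge) modnDr modn_small; lia.
move=> l_eq; have s_gt0 : 0 < size s by rewrite sz_eq.
by have := leq_nth_Eseq s_gt0 (index_lt _ lE) (leq0n _); rewrite -l_eq; lia.
Qed.

Lemma nth_Eseq_iter j :
  nth d s ((index d s + j) %% size s) = inZp (iter j (next_Erow E) d).
Proof.
have d_idx : index d s < size s by rewrite index_mem mem_Eseq.
elim: j => [|j IH]; first by rewrite addn0 modn_small // nth_index ?mem_Eseq // valZpK.
rewrite iterS inZp_next_Erow.
rewrite -[_ %% n]/(nat_of_ord (inZp (iter j (next_Erow E) d) : 'I_n)) -IH.
rewrite next_Erow_nth_Eseq; last by rewrite ltn_pmod //; lia.
by rewrite -[((_ + j) %% _).+1]addn1 modnDml addn1 addnS.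
Qed.

Lemma OmegaE k : Omega k E d = inZp (iter (k - 1) (next_Erow E) d).
Proof. exact: nth_Eseq_iter. Qed.

End SortedRows.

Lemma Theta_inZp n' k m : k <= n'.+1 ->
  Theta k (inZp m : 'I_n'.+1) = inZp (m + (n'.+1 - k.-1)).
Proof.
move=> k_le; rewrite /Theta addmodE -inZpD subn1 modn_small //; lia.
Qed.

Section Walk.
Variables (n' k : nat) (E : {set 'I_n'.+1}) (d : 'I_n'.+1).
Local Notation n := n'.+1.
Hypotheses (k_odd : odd k) (k_gt1 : 1 < k) (k_lt_n : k < n) (dE : d \in E).
Local Notation F := (CN (kdiag n k) (RofE E) (fun _ => 1%R)).
Local Notation e c := (iter c (next_Erow E) d).

Lemma mem_iter_next_Erow c : inZp (e c) \in E.
Proof. by case: c => [|c]; [rewrite valZpK | apply: mem_next_Erow dE]. Qed.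

Lemma cell_at_double_notin_D1 i c : 0 < c < k -> cell_at i ((2 * c) %% k) \notin D1 n.
Proof.
move=> c_range; have lt_k : (2 * c) %% k < k by rewrite ltn_pmod; lia.
by rewrite cell_at_D1 (modn_small (ltn_trans lt_k k_lt_n)) double_modn_eq0; lia.
Qed.

Lemma iter_CN_Erow c s : c < k.-1 -> 0 < s <= e c.+1 - e c ->
  iter s F (cell_at (e c) ((2 * c) %% k)) = cell_at (e c + s) ((2 * c.+1) %% k).
Proof.
case: s => // s c_lt /andP[_ s_le]; have c_lt' : c < k by lia.
rewrite iterSr CN_E ?mem_iter_next_Erow ?ltn_pmod ?double_modn_eq_pred2 //; try lia.
rewrite modnDml mulnS addnC iter_CN_nonE -?addSnnS //.
  by rewrite -mulnS lt0n double_modn_eq0 ?ltn_pmod //; lia.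
move=> l /andP[l_ge l_lt]; apply: (@next_Erow_min _ _ (e c)).
by rewrite -iterS; apply/andP; split; lia.
Qed.

Lemma first_hit_Erow c : c <= k.-1 ->
  first_hit F (fun x => x \in D1 n) (cell_at (e c) ((2 * c) %% k))
            (cell_at (e k.-1 + (n - k.-1)) 0).
Proof.
move def_j : (k.-1 - c) => j; elim: j c def_j => [|j IH] c def_j c_le.
  have -> : c = k.-1 by lia.
  have /eqP hit_diag : ((2 * k.-1) %% k).+2 == k by rewrite double_modn_eq_pred2 //; lia.
  rewrite (_ : (2 * k.-1) %% k = k.-2); last lia.
  rewrite -(CN_E_hit k_gt1 k_lt_n (mem_iter_next_Erow k.-1)).
  by apply: first_hit_one; rewrite CN_E_hit ?mem_iter_next_Erow // cell_at_D1 mod0n.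
have e_lt : e c < e c.+1 by apply: next_Erow_gt.
apply: (@first_hit_iter _ _ _ (e c.+1 - e c)).
  move=> s s_range; rewrite iter_CN_Erow //=; last lia.
  by apply/negP/cell_at_double_notin_D1; lia.
have c_lt : c < k.-1 by rewrite -subn_gt0 def_j.
have gap : 0 < e c.+1 - e c <= e c.+1 - e c by rewrite subn_gt0 e_lt /=.
rewrite iter_CN_Erow // subnKC; last exact: ltnW.
by apply: IH; rewrite ?subnS ?def_j.
Qed.

End Walk.

Theorem proposition3p1 (n k : nat) (E : {set 'I_n}) :
  odd n -> odd k -> 3 <= k -> k < n ->
  forall d : 'I_n,
    first_hit (CN (kdiag n k) (RofE E) (fun _ : 'I_n => 1%R))
              (fun x => x \in D1 n) (d, d) (S_D k E d, S_D k E d).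
Proof.
case: n E => [|n'] E; first by move=> _ _ _; rewrite ltn0.
move=> _ k_odd k_ge3 k_lt_n d; have k_gt1 : 1 < k by apply: ltn_trans k_ge3.
have -> : (d, d) = cell_at d 0 by rewrite cell_at0 valZpK.
rewrite /S_D; case: ifP => dE.
  rewrite OmegaE // (Theta_inZp _ (ltnW k_lt_n)) subn1 -cell_at0.
  by have := first_hit_Erow k_odd k_gt1 k_lt_n dE (leq0n k.-1); rewrite muln0 mod0n.
rewrite -[d in Theta k d]valZpK (Theta_inZp _ (ltnW k_lt_n)) -cell_at0.
rewrite -(CN_nonE_hit k_gt1 k_lt_n (E := E)) ?valZpK ?dE //.
by apply: first_hit_one; rewrite CN_nonE_hit ?valZpK ?dE // cell_at_D1 mod0n.
Qed.
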